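(* Let $k \ge 2$. For any $n, m \in \mathbb{N}$ with $1 \le m \le n$, we have $n - o_n(m) = \mathcal{G}(nk - m)$.
   Context: Josephus problem: the numbers $1,2,\dots,n$ are arranged in a circle; starting the count at $1$, every $k$-th number still present is removed (counting resumes with the next remaining number after each removal) until one number remains. For $1 \le m \le n$, $o_n(m)=i$ if $m$ is the $i$-th number removed ($1 \le i \le n-1$), and $o_n(m)=n$ if $m$ is the number that remains. Maximum Nim with rule function $f(x)=\lfloor x/k\rfloor$: a position is a pile of $x \ge 0$ stones, and from $x$ one may move to $x-u$ for any integer $u$ with $1 \le u \le \lfloor x/k \rfloor$. The Grundy number is defined recursively by $\mathcal{G}(x) = \mathrm{mex}\{\mathcal{G}(x-u) : 1 \le u \le \lfloor x/k\rfloor\}$, where $\mathrm{mex}(S)$ is the least non-negative integer not in $S$ (so $\mathcal{G}(x)=0$ when $\lfloor x/k\rfloor = 0$). *)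

From mathcomp Require Import all_boot.
Set Implicit Arguments. Unset Strict Implicit. Unset Printing Implicit Defensive.

(* [jos_run k fuel s p] : the circle is the list [s] (in circular order),
   counting starts (with "1") at index [p] of [s].  The k-th number still
   present, at index (p + k - 1) mod |s|, is removed; counting resumes with
   the next remaining number, which sits at that same index in the shortened
   list (taken mod its size at the next step).  Returns the removal order;
   the last element of the result is the number that remains. *)
Fixpoint jos_run (k fuel : nat) (s : seq nat) (p : nat) : seq nat :=
  match fuel with
  | 0 => [::]
  | f.+1 =>
      if s is [::] then [::] else
      let i := (p + k.-1) %% size s in
      nth 0 s i :: jos_run k f (take i s ++ drop i.+1 s) i
  end.

(* the full elimination order of 1..n, starting the count at 1;
   its i-th entry (1-based, i <= n-1) is the i-th removed number and
   its n-th entry is the survivor *)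
Definition jos_order (k n : nat) : seq nat := jos_run k n (iota 1 n) 0.

Definition jos_o (k n m : nat) : nat := (index m (jos_order k n)).+1.

Definition mex (s : seq nat) : nat := find (fun j => j \notin s) (iota 0 (size s).+1).

Fixpoint grundy_aux (k fuel x : nat) : nat :=
  match fuel with
  | 0 => 0
  | f.+1 => mex [seq grundy_aux k f (x - u) | u <- iota 1 (x %/ k)]
  end.

Definition grundy (k x : nat) : nat := grundy_aux k x.+1 x.

(* Both sides obey the same recursion in n.  For Maximum Nim, induction on x shows
   that G maps the window [x - x/k, x] bijectively onto [0, x/k]: passing from x to
   x+1 either extends the window by one point (when k | x+1, and then G(x+1) = x/k + 1)
   or slides it by one (and then G(x+1) is the value of the point that left it).
   Hence G(nk) = n, and G(x) = G(x - (n+1)) for nk < x < (n+1)k.  For Josephus,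
   a circle of n+1 people first loses the one at position c = (k-1) mod (n+1) and
   then continues as a circle of n people read from c+1.  Reducing (n+1)k - 1 - j
   modulo n+1 inside its block gives n exactly when j = c, and otherwise lands on
   nk - 1 - j' with j' the new position of person j. *)

From mathcomp Require Import all_boot zify.
Set Implicit Arguments.
Unset Strict Implicit.
Unset Printing Implicit Defensive.

Lemma mex_eq (s : seq nat) (v : nat) :
  v \notin s -> (forall w, w < v -> w \in s) -> mex s = v.
Proof.
move=> vNs ltv_s.
have le_v_size : v <= size s.
  rewrite -(size_iota 0 v) uniq_leq_size ?iota_uniq // => w.
  by rewrite mem_iota add0n => /andP[_ /ltv_s].
rewrite /mex; set l := iota 0 (size s).+1; set f := find _ l.
have has_l : has (fun j => j \notin s) l.
  by apply/hasP; exists v => //; rewrite mem_iota; lia.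
have f_lt : f < (size s).+1 by rewrite -[X in _ < X](size_iota 0) -has_find.
case: (ltngtP f v) => // [f_lt_v | v_lt_f].
- by have := nth_find 0 has_l; rewrite -/f nth_iota // add0n ltv_s.
- by have := before_find 0 v_lt_f; rewrite nth_iota ?add0n ?vNs.
Qed.

(* The index of entry [j] of a circle of size [n+1] after entry [c] is removed and
   the circle is reread from entry [c+1]. *)
Definition shift_pos n c j := if c < j then j - c - 1 else j + n - c.

Section MaximumNim.

Variable k : nat.
Hypothesis k_gt0 : 0 < k.

Lemma grundy_aux_fuel f1 f2 x :
  x < f1 -> x < f2 -> grundy_aux k f1 x = grundy_aux k f2 x.
Proof.
elim: f1 f2 x => [//|f1 IH] [//|f2] x lt1 lt2 /=.
congr mex; apply/eq_in_map => u; rewrite mem_iota => u_in.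
by apply: IH; have := leq_div x k; lia.
Qed.

Lemma grundyE x : grundy k x = mex [seq grundy k (x - u) | u <- iota 1 (x %/ k)].
Proof.
rewrite [LHS]/=; congr mex; apply/eq_in_map => u; rewrite mem_iota => u_in.
by apply: grundy_aux_fuel; have := leq_div x k; lia.
Qed.

Lemma grundy_optionsP x w :
  reflect (exists2 y, x - x %/ k <= y < x & grundy k y = w)
          (w \in [seq grundy k (x - u) | u <- iota 1 (x %/ k)]).
Proof.
have le_div := leq_div x k.
apply: (iffP mapP) => [[u] | [y y_in <-]].
  by rewrite mem_iota => u_in ->; exists (x - u) => //; lia.
by exists (x - y); rewrite ?mem_iota; [lia | congr grundy; lia].
Qed.

Definition grundy_window_bij x :=
  [/\ forall y, x - x %/ k <= y <= x -> grundy k y <= x %/ k,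
      forall v, v <= x %/ k -> exists2 y, x - x %/ k <= y <= x & grundy k y = v &
      forall y1 y2, x - x %/ k <= y1 <= x -> x - x %/ k <= y2 <= x ->
        grundy k y1 = grundy k y2 -> y1 = y2].

Lemma grundy0 : grundy k 0 = 0.
Proof. by rewrite grundyE div0n. Qed.

Lemma grundy_window_bij0 : grundy_window_bij 0.
Proof.
rewrite /grundy_window_bij div0n; split=> [y | v | y1 y2]; try lia.
- by rewrite leqn0 => /eqP ->; rewrite grundy0.
- by rewrite leqn0 => /eqP ->; exists 0; rewrite ?grundy0.
Qed.

Section WindowStep.

Variable x : nat.
Hypothesis window_x : grundy_window_bij x.

Lemma grundyS_dvd : k %| x.+1 -> grundy k x.+1 = (x %/ k).+1 /\ grundy_window_bij x.+1.
Proof.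
move=> dvd_k; have divS : x.+1 %/ k = (x %/ k).+1 by rewrite divnS // dvd_k.
case: window_x => le_div onto inj {dvd_k}.
have le_div_x := leq_div x k.
set q := x %/ k in divS le_div onto inj le_div_x *.
have grundy_x1 : grundy k x.+1 = q.+1.
  rewrite grundyE; apply: mex_eq => [|w w_lt].
    by apply/grundy_optionsP => -[y y_in y_val]; have := le_div y; lia.
  have [y y_in <-] := onto w ltac:(lia).
  by apply/grundy_optionsP; exists y => //; lia.
rewrite /grundy_window_bij divS grundy_x1; split=> //; split.
- move=> y y_in; case: (ltnP y x.+1) => y_le.
    by have := le_div y; lia.
  have -> : y = x.+1 by lia.
  by rewrite grundy_x1.
- move=> v v_le; case: (ltnP v q.+1) => v_lt.
    by have [y y_in <-] := onto v v_lt; exists y => //; lia.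
  by exists x.+1; rewrite ?grundy_x1; lia.
- move=> y1 y2 y1_in y2_in.
  case: (ltnP y1 x.+1) => y1_le; case: (ltnP y2 x.+1) => y2_le; try lia.
  + by apply: inj; lia.
  + have -> : y2 = x.+1 by lia.
    by rewrite grundy_x1; have := le_div y1; lia.
  + have -> : y1 = x.+1 by lia.
    by rewrite grundy_x1; have := le_div y2; lia.
Qed.

Lemma grundyS_ndvd :
  ~~ (k %| x.+1) -> grundy k x.+1 = grundy k (x - x %/ k) /\ grundy_window_bij x.+1.
Proof.
move=> ndvd_k; have divS : x.+1 %/ k = x %/ k by rewrite divnS // (negbTE ndvd_k).
case: window_x => le_div onto inj {ndvd_k}.
have le_div_x := leq_div x k.
set q := x %/ k in divS le_div onto inj le_div_x *.
have g_le : grundy k (x - q) <= q by apply: le_div; lia.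
set g := grundy k (x - q) in g_le *.
have g_fresh y : x.+1 - q <= y <= x -> grundy k y <> g.
  by move=> y_in /inj eq_y; have := eq_y ltac:(lia) ltac:(lia); lia.
have grundy_x1 : grundy k x.+1 = g.
  rewrite grundyE; apply: mex_eq => [|w w_lt].
    by apply/grundy_optionsP => -[y y_in]; apply: g_fresh; lia.
  have [y y_in y_val] := onto w ltac:(lia).
  apply/grundy_optionsP; exists y => //.
  by case: (eqVneq y (x - q)) => [y_eq | ?]; [move: y_val; rewrite y_eq -/g; lia | lia].
rewrite /grundy_window_bij divS grundy_x1; split=> //; split.
- move=> y y_in; case: (ltnP y x.+1) => y_le; first by apply: le_div; lia.
  have -> : y = x.+1 by lia.
  by rewrite grundy_x1.
- move=> v /onto[y y_in <-].
  case: (eqVneq y (x - q)) => [-> | y_neq]; last by exists y => //; lia.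
  by exists x.+1; rewrite ?grundy_x1; lia.
- move=> y1 y2 y1_in y2_in.
  case: (ltnP y1 x.+1) => y1_le; case: (ltnP y2 x.+1) => y2_le; try lia.
  + by apply: inj; lia.
  + have -> : y2 = x.+1 by lia.
    by rewrite grundy_x1 => eq_g; exfalso; apply: (g_fresh y1) eq_g; lia.
  + have -> : y1 = x.+1 by lia.
    by rewrite grundy_x1 => /esym eq_g; exfalso; apply: (g_fresh y2) eq_g; lia.
Qed.

End WindowStep.

Lemma grundy_window x : grundy_window_bij x.
Proof.
elim: x => [|x IH]; first exact: grundy_window_bij0.
by case: (boolP (k %| x.+1)) => [/(grundyS_dvd IH) | /(grundyS_ndvd IH)] [].
Qed.

Lemma grundy_rec x :
  grundy k x = if k %| x then x %/ k else grundy k (x.-1 - x %/ k).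
Proof.
case: x => [|x]; first by rewrite grundy0 dvdn0 div0n.
rewrite divnS //; case: ifP => [dvd_k | /negbT ndvd_k].
- by have [-> _] := grundyS_dvd (grundy_window x) dvd_k; rewrite dvd_k.
- by have [-> _] := grundyS_ndvd (grundy_window x) ndvd_k; rewrite (negbTE ndvd_k).
Qed.

Lemma grundy_mul n : grundy k (n * k) = n.
Proof. by rewrite grundy_rec dvdn_mull // mulnK. Qed.

Lemma grundy_block n x :
  n * k < x < n.+1 * k -> grundy k x = grundy k (x - n.+1).
Proof.
rewrite mulSn => /andP[lo hi]; rewrite grundy_rec.
have x_eq : x = n * k + (x - n * k) by lia.
have divx : x %/ k = n by rewrite x_eq divnMDl // divn_small ?addn0 //; lia.
have ndvd : ~~ (k %| x) by rewrite /dvdn x_eq modnMDl modn_small; lia.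
by rewrite (negbTE ndvd) divx; congr grundy; lia.
Qed.

Lemma grundy_block_iter n t r :
  t * n.+1 + r < k -> grundy k (n * k + t * n.+1 + r) = grundy k (n * k + r).
Proof.
elim: t => [|t IH] lt_k; first by rewrite mul0n addn0.
rewrite mulSn in lt_k *; rewrite (@grundy_block n); last by rewrite mulSn; lia.
by rewrite -IH; [congr grundy | ]; lia.
Qed.

End MaximumNim.

Lemma grundy_top_block k n j : 1 < k -> j <= n ->
  grundy k (n.+1 * k - 1 - j) =
  if j == k.-1 %% n.+1 then n
  else grundy k (n * k - 1 - shift_pos n (k.-1 %% n.+1) j).
Proof.
move=> k_gt1 le_jn; have k_gt0 : 0 < k by lia.
rewrite /shift_pos.
move: (divn_eq k.-1 n.+1) (ltn_pmod k.-1 (ltn0Sn n)).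
move: (k.-1 %/ n.+1) (k.-1 %% n.+1) => q c k_eq lt_cn.
have nk_ge : n * 2 <= n * k by rewrite leq_mul2l; lia.
rewrite mulSn.
case: (leqP j c) => [le_jc | lt_cj].
- rewrite (_ : k + n * k - 1 - j = n * k + q * n.+1 + (c - j)); last by lia.
  rewrite (grundy_block_iter k_gt0); last by lia.
  case: (eqVneq j c) => [-> | neq_jc]; first by rewrite subnn addn0 grundy_mul.
  by rewrite (@grundy_block k k_gt0 n) ?mulSn; [congr grundy | ]; lia.
- rewrite (gtn_eqF lt_cj); case: q k_eq => [|q] k_eq; first by congr grundy; lia.
  rewrite mulSn in k_eq.
  rewrite (_ : k + n * k - 1 - j = n * k + q * n.+1 + (n.+1 + c - j)); last by lia.
  rewrite (grundy_block_iter k_gt0); last by lia.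
  by rewrite (@grundy_block k k_gt0 n) ?mulSn; [congr grundy | ]; lia.
Qed.

Section Josephus.

Variable k : nat.

Definition jos_seq (s : seq nat) : seq nat := jos_run k (size s) s 0.

Lemma rot_nth_drop_take T (x0 : T) (s : seq T) i : i < size s ->
  rot i s = nth x0 s i :: (drop i.+1 s ++ take i s).
Proof. by move=> lt_i; rewrite /rot (drop_nth x0 lt_i). Qed.

Lemma rot_drop_take T (s : seq T) i : i < size s ->
  rot i (take i s ++ drop i.+1 s) = drop i.+1 s ++ take i s.
Proof. by move=> lt_i; rewrite -{1}(size_takel (ltnW lt_i)) rot_size_cat. Qed.

Lemma size_take_drop T (s : seq T) i : i < size s ->
  size (take i s ++ drop i.+1 s) = (size s).-1.
Proof. by move=> lt_i; rewrite size_cat size_takel ?size_drop 1?ltnW //; lia. Qed.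

Lemma rot_rot_mod T (s : seq T) p c : p <= size s -> c < size s ->
  rot c (rot p s) = rot ((p + c) %% size s) s.
Proof.
move=> le_p lt_c; rewrite rot_add_mod ?(ltnW lt_c) // [c + p]addnC.
case: (ltngtP (p + c) (size s)) => [lt_sum | gt_sum | ->].
- by rewrite modn_small.
- by rewrite -{2}(subnK (ltnW gt_sum)) modnDr modn_small //; lia.
- by rewrite modnn rot0 rot_size.
Qed.

Lemma jos_run_cons n (s : seq nat) p : size s = n.+1 ->
  let i := (p + k.-1) %% n.+1 in
  jos_run k n.+1 s p = nth 0 s i :: jos_run k n (take i s ++ drop i.+1 s) i.
Proof. by case: s => // a s0 size_s; rewrite /= -size_s. Qed.

Lemma jos_run_rot n (s : seq nat) p :
  size s = n -> p <= n -> jos_run k n s p = jos_seq (rot p s).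
Proof.
elim: n s p => [|n IH] s p size_s le_p; first by case: s size_s.
rewrite /jos_seq size_rot size_s !jos_run_cons ?size_rot // add0n.
set i := (p + k.-1) %% n.+1; set c := k.-1 %% n.+1.
have lt_i : i < n.+1 by rewrite ltn_pmod.
have lt_c : c < n.+1 by rewrite ltn_pmod.
rewrite !IH ?size_take_drop ?size_rot ?size_s ?rot_drop_take ?size_rot ?size_s //.
have rot_ci : rot c (rot p s) = rot i s by rewrite rot_rot_mod size_s // /c modnDmr.
have := @rot_nth_drop_take _ 0 (rot p s) c; rewrite size_rot size_s => /(_ lt_c).
by rewrite rot_ci (rot_nth_drop_take 0) ?size_s // => -[-> ->].
Qed.

Lemma jos_seq_cons n (s : seq nat) : size s = n.+1 ->
  let c := k.-1 %% n.+1 in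
  jos_seq s = nth 0 s c :: jos_seq (drop c.+1 s ++ take c s).
Proof.
move=> size_s c; have lt_c : c < n.+1 by rewrite ltn_pmod.
rewrite {1}/jos_seq size_s jos_run_cons // add0n.
by rewrite jos_run_rot ?size_take_drop ?rot_drop_take ?size_s.
Qed.

End Josephus.

Lemma nth_shift_pos T (x0 : T) (s : seq T) n c j :
  size s = n.+1 -> c <= n -> j <= n -> j != c ->
  nth x0 s j = nth x0 (drop c.+1 s ++ take c s) (shift_pos n c j).
Proof.
move=> size_s le_cn le_jn neq_jc; rewrite /shift_pos nth_cat size_drop size_s.
case: (ltnP c j) => [lt_cj | le_jc].
  by rewrite ifT ?nth_drop; [congr nth | ]; lia.
by rewrite ifF ?nth_take; [congr nth | | ]; lia.
Qed.

Lemma jos_index_grundy k n (s : seq nat) j : 1 < k -> uniq s -> size s = n -> j < n ->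
  n - 1 - index (nth 0 s j) (jos_seq k s) = grundy k (n * k - 1 - j).
Proof.
move=> k_gt1; elim: n s j => [//|n IH] s j uniq_s size_s lt_jn.
rewrite (jos_seq_cons k size_s) grundy_top_block // /=.
set c := k.-1 %% n.+1; have lt_cn : c < n.+1 by rewrite ltn_pmod.
case: (eqVneq j c) => [-> | neq_jc]; first by rewrite eqxx /= subn1 subn0.
rewrite nth_uniq ?size_s // eq_sym (negbTE neq_jc).
set s' := drop c.+1 s ++ take c s.
have rot_c : rot c s = nth 0 s c :: s' by rewrite (rot_nth_drop_take 0) ?size_s.
have uniq_s' : uniq s' by move: uniq_s; rewrite -(rot_uniq c) rot_c => /andP[].
have size_s' : size s' = n by have := size_rot c s; rewrite rot_c size_s => -[].
rewrite (@nth_shift_pos _ 0 s n c j) // -/s' -(IH s') //; first lia.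
by rewrite /shift_pos; case: ifP; lia.
Qed.

Theorem theorem2 (k n m : nat) :
  2 <= k -> 1 <= m <= n -> n - jos_o k n m = grundy k (n * k - m).
Proof.
move=> k_ge2 /andP[m_gt0 le_mn].
have m_nth : nth 0 (iota 1 n) m.-1 = m by rewrite nth_iota; lia.
have lt_mn : m.-1 < n by lia.
have := jos_index_grundy k_ge2 (iota_uniq 1 n) (size_iota 1 n) lt_mn.
rewrite m_nth /jos_o /jos_order /jos_seq size_iota.
by rewrite (_ : n * k - m = n * k - 1 - m.-1); lia.
Qed.
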